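(* Let $n>1$, let $q$ be an odd prime power, and let $\xi$ be a generator of ${\rm GF}(q)^\times$. Then ${\rm Sp}(2n,q)$ is generated by $\hat h_1(\xi)=\mathrm{diag}(\xi,1,\dots,1,\xi^{-1})$ and $\hat x_{12}(1)\,\hat w$, where $\hat x_{12}(1)=(I+E_{12})(I-E_{2n-1,2n})$ and $\hat w$ is the $2n\times 2n$ matrix whose nonzero entries are: $1$ in positions $(i+1,i)$ for $1\le i\le n-1$; $-1$ in position $(2n,n)$; $1$ in positions $(j-1,j)$ for $n+2\le j\le 2n$; and $1$ in position $(1,n+1)$. (For $n=2$ the generators are $\mathrm{diag}(\xi,1,1,\xi^{-1})$ and $\begin{pmatrix}1&0&1&0\\1&0&0&0\\0&1&0&1\\0&-1&0&0\end{pmatrix}$.)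
   Context: ${\rm Sp}(2n,q)$ is the group of $2n\times 2n$ matrices $X$ over ${\rm GF}(q)$ with $X^tJX=J$, where $J=\sum_{i=1}^n\big(E_{i,2n+1-i}-E_{2n+1-i,i}\big)$. $E_{ij}$ is the matrix unit with $1$ in position $(i,j)$. For $1\le i\le n$ put $i'=2n+1-i$; $\hat h_i(\alpha)=h_i(\alpha)h_{i'}(\alpha^{-1})$ with $h_k(\alpha)$ the identity with $k$-th diagonal entry replaced by $\alpha$, and $\hat x_{ij}(\alpha)=x_{ij}(\alpha)x_{j'i'}(-\alpha)$ with $x_{ij}(\alpha)=I+\alpha E_{ij}$. The matrix $\hat w$ is the permutation matrix (entry $(\sigma(j),j)$ equal to $1$) of the $2n$-cycle $\sigma=(1,2,\dots,n,1',2',\dots,n')$ with its $(2n,n)$ entry replaced by $-1$. *)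

(* Matrices over a finite field F, of size 2n = n.*2.
   Indices are 0-based here: the paper's (1-based) row/column k is our k-1. *)
From HB Require Import structures.
From mathcomp Require Import all_boot all_order all_algebra all_fingroup all_field.
Set Implicit Arguments. Unset Strict Implicit. Unset Printing Implicit Defensive.
Import GRing.Theory.
Local Open Scope ring_scope.

Section SpDefs.
Variable F : fieldType.
Variable n : nat.
Local Notation N := (n.*2).

(* matrix unit E_{a+1,b+1} (0-based indices a b) *)
Definition Emx (a b : nat) : 'M[F]_N :=
  \matrix_(i < N, j < N) ((nat_of_ord i == a) && (nat_of_ord j == b))%:R.

Definition Jmx : 'M[F]_N := \sum_(i < n) (Emx i (N.-1 - i) - Emx (N.-1 - i) i).

Definition inSp (X : 'M[F]_N) : Prop := X^T *m Jmx *m X = Jmx.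

(* hat h_1(xi) = h_1(xi) h_{1'}(xi^-1) = diag(xi,1,...,1,xi^-1) *)
Definition hmx (k : nat) (a : F) : 'M[F]_N := 1%:M + (a - 1) *: Emx k k.
Definition hat_h1 (xi : F) : 'M[F]_N := hmx 0 xi *m hmx N.-1 xi^-1.

Definition hat_x12_1 : 'M[F]_N := (1%:M + Emx 0 1) *m (1%:M - Emx (N.-2) (N.-1)).

Definition hat_w : 'M[F]_N :=
  \matrix_(i < N, j < N)
    (if ((j : nat) <= n - 2)%N && ((i : nat) == j.+1) then 1
     else if ((i : nat) == N.-1) && ((j : nat) == n.-1) then -1
     else if (n.+1 <= j)%N && ((j : nat) <= N.-1)%N && ((i : nat) == j.-1) then 1
     else if ((i : nat) == 0%N) && ((j : nat) == n) then 1
     else 0).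

End SpDefs.

Inductive gen_by (F : fieldType) (m : nat) (S : 'M[F]_m -> Prop) : 'M[F]_m -> Prop :=
| gen_base X : S X -> gen_by S X
| gen_one : gen_by S 1%:M
| gen_mul X Y : gen_by S X -> gen_by S Y -> gen_by S (X *m Y)
| gen_inv X : gen_by S X -> gen_by S (invmx X).

From HB Require Import structures.
From mathcomp Require Import all_boot all_order all_algebra all_fingroup all_field.
From mathcomp Require Import zify ring.
Set Implicit Arguments. Unset Strict Implicit. Unset Printing Implicit Defensive.
Import GRing.Theory.
Local Open Scope ring_scope.

(* First, a subgroup H of Sp(2n) containing every symplectic
   transvection [x |-> x + a omega(v, x) v] is all of Sp(2n): by Witt's argument H acts
   transitively on hyperbolic pairs orthogonal to the first k standard ones, so a
   symplectic matrix can be corrected inside H to fix one more standard pair.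
   Second, such an H contains every transvection as soon as it contains those along
   basis vectors and the Siegel elements [siegel e_0 e_(N-1-j)], since these move
   any nonzero vector to a basis vector.
   For the group generated by h = hat_h1(xi) and a = hat_x12(1) hat_w: conjugating h
   by a, and dividing by the conjugate of the result under h, leaves a nontrivial
   root element (this uses xi <> 1); conjugation by h scales its parameter by a
   power of xi, a generator of GF(q)^*, so all root elements x12(t), and then
   hat_w = x12(-1) a, lie in the group. Conjugates of x12(t) by powers of hat_w give
   the required Siegel elements, and their commutators the transvections along basis
   vectors (q odd lets us divide by 2). *)

Ltac case_ifs := repeat match goal with
  | |- context [if ?c then _ else _] => case: (boolP c) => /= ?
  | |- context [nat_of_bool ?c] => case: (boolP c) => /= ?
  | H : context [if ?c then _ else _] |- _ => move: H; case: (boolP c) => /= ? ?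
  end; try (exfalso; lia).

Lemma sum_nat_pick (R : pzSemiRingType) (m a : nat) (P : nat -> bool) :
  \sum_(k < m) (((a == k) && P k)%:R : R) = ((a < m)%N && P a)%:R.
Proof.
elim: m => [|m IH]; first by rewrite big_ord0 ltn0.
rewrite big_ord_recr /= IH.
case: (ltngtP a m) => am.
- by rewrite (_ : (a < m.+1)%N) ?addr0 //; lia.
- by rewrite (_ : (a < m.+1)%N = false) ?addr0 //; lia.
- by rewrite am ltnSn add0r.
Qed.

Lemma sum_antipodal (V : zmodType) (m : nat) (f : nat -> V) :
  (forall k, (k < m.*2)%N -> f (m.*2.-1 - k)%N = - f k) ->
  \sum_(0 <= k < m.*2) f k = 0.
Proof.
move=> fN; rewrite (@big_cat_nat _ _ _ m) //=; last lia.
have -> : \sum_(m <= k < m.*2) f k = \sum_(0 <= k < m) f (k + m)%N.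
  by rewrite -{1}[m]add0n big_addn -addnn addnK.
rewrite [X in _ + X]big_nat_rev add0n.
rewrite [X in _ + X](eq_big_nat _ _ (F2 := fun k => - f k)) ?sumrN ?subrr //.
by move=> k km; rewrite -fN; [congr f|]; lia.
Qed.

Section SymplecticGroup.
Variables (F : fieldType) (n : nat).
Hypothesis n_gt0 : (0 < n)%N.
Local Notation N := (n.*2).
Local Notation J := (Jmx F n).

Lemma Jmx_entry (i j : 'I_N) : J i j =
  if ((i : nat) + j == N.-1)%N then (if (i < n)%N then 1 else -1) else 0.
Proof.
rewrite /Jmx summxE.
under eq_bigr => k _ do rewrite !mxE.
rewrite sumrB (sum_nat_pick _ _ _ (fun k => (j : nat) == N.-1 - k)%N).
under eq_bigr => k _ do rewrite andbC.
rewrite (sum_nat_pick _ _ _ (fun k => (i : nat) == N.-1 - k)%N).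
have hi := ltn_ord i; have hj := ltn_ord j.
case: ifP => /eqP E.
  case: ifP => lt.
    have -> : ((j : nat) == N.-1 - i)%N by apply/eqP; lia.
    have -> : (j < n)%N = false by lia.
    by rewrite /= subr0.
  have -> : (j < n)%N by lia.
  have -> : ((i : nat) == N.-1 - j)%N by apply/eqP; lia.
  by rewrite /= sub0r.
have -> : ((j : nat) == N.-1 - i)%N = false by apply/negbTE/eqP; lia.
have -> : ((i : nat) == N.-1 - j)%N = false by apply/negbTE/eqP; lia.
by rewrite !andbF subr0.
Qed.

Lemma double_gt0 : (0 < N)%N. Proof. lia. Qed.

(* Basis vectors and coordinates are indexed by [nat]: [ordN k] is the index
   [k] when [k < N], and the junk index [0] otherwise. *)
Definition ordN (k : nat) : 'I_N := insubd (Ordinal double_gt0) k.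
Definition evec (k : nat) : 'cV[F]_N := \col_(i < N) ((i : nat) == k)%:R.
Definition coord (x : 'cV[F]_N) (k : nat) : F := x (ordN k) 0.
Definition sform (x y : 'cV[F]_N) : F := (x^T *m J *m y) 0 0.
Definition Jsign (k : nat) : F := if (n <= k)%N then 1 else -1.

Lemma ordNK k : (k < N)%N -> ordN k = k :> nat.
Proof. by move=> kN; rewrite /ordN val_insubd kN. Qed.

Lemma ordN_val (i : 'I_N) : ordN i = i.
Proof. by apply: val_inj; rewrite /= ordNK. Qed.

Lemma evecE k i j : evec k i j = ((i : nat) == k)%:R.
Proof. by rewrite mxE. Qed.

Lemma mulmx_evec m (A : 'M[F]_(m, N)) k i j :
  (k < N)%N -> (A *m evec k) i j = A i (ordN k).
Proof.
move=> kN; rewrite mxE (bigD1 (ordN k)) //= big1 ?addr0.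
  by rewrite evecE ordNK // eqxx mulr1.
move=> l /negbTE lk; rewrite evecE.
have -> : ((l : nat) == k) = false.
  by apply/negbTE; apply: contraFN lk => /eqP <-; rewrite ordN_val.
by rewrite mulr0.
Qed.

Lemma eq_mulmx_evec m (A B : 'M[F]_(m, N)) :
  (forall k, (k < N)%N -> A *m evec k = B *m evec k) -> A = B.
Proof.
move=> AB; apply/matrixP => i j.
by have /matrixP /(_ i 0) := AB j (ltn_ord j); rewrite !mulmx_evec // ordN_val.
Qed.

Lemma coordD x y k : coord (x + y) k = coord x k + coord y k.
Proof. by rewrite /coord mxE. Qed.
Lemma coordZ a x k : coord (a *: x) k = a * coord x k.
Proof. by rewrite /coord mxE. Qed.
Lemma coordN x k : coord (- x) k = - coord x k.
Proof. by rewrite /coord mxE. Qed.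
Lemma coord0 k : coord 0 k = 0.
Proof. by rewrite /coord mxE. Qed.
Lemma coord_evec l k : (k < N)%N -> coord (evec l) k = (k == l)%:R.
Proof. by move=> kN; rewrite /coord evecE ordNK. Qed.

Definition coordE := (coordD, coordZ, coordN).

Lemma eq_coord (x y : 'cV[F]_N) :
  (forall k, (k < N)%N -> coord x k = coord y k) -> x = y.
Proof.
move=> xy; apply/matrixP => i j; rewrite (ord1 j).
by have := xy i (ltn_ord i); rewrite /coord ordN_val.
Qed.

Lemma exists_coord_neq0 (x : 'cV[F]_N) : x != 0 -> exists2 l, (l < N)%N & coord x l != 0.
Proof.
move=> x0; have /existsP [l xl] : [exists l : 'I_N, coord x l != 0].
  apply: contraNT x0 => /existsPn all0; apply/eqP/eq_coord => k kN.
  by rewrite coord0; apply/eqP/negbNE; exact: (all0 (Ordinal kN)).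
by exists l => //; exact: ltn_ord.
Qed.

Lemma Jsign_lo k : (k < n)%N -> Jsign k = -1.
Proof. by rewrite /Jsign; case: ifP => //; lia. Qed.
Lemma Jsign_hi k : (n <= k)%N -> Jsign k = 1.
Proof. by rewrite /Jsign => ->. Qed.
Lemma Jsign_neq0 k : Jsign k != 0.
Proof. by rewrite /Jsign; case: ifP => _; rewrite ?oppr_eq0 oner_eq0. Qed.
Lemma Jsign_rev k : (k < N)%N -> Jsign (N.-1 - k) = - Jsign k.
Proof. by move=> kN; rewrite /Jsign; case_ifs; rewrite ?opprK. Qed.

Lemma Jmx_evec k : (k < N)%N -> J *m evec k = Jsign k *: evec (N.-1 - k).
Proof.
move=> kN; apply/matrixP => i j; rewrite mulmx_evec // !mxE Jmx_entry ordNK // /Jsign.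
have hi := ltn_ord i.
case: ifP => /eqP E.
  have -> : ((i : nat) == N.-1 - k)%N by apply/eqP; lia.
  by case: ifP => a; case: ifP => b; rewrite ?mulr1 //; lia.
have -> : ((i : nat) == N.-1 - k)%N = false by apply/negbTE/eqP; lia.
by rewrite mulr0.
Qed.

Lemma trmx_Jmx : J^T = - J.
Proof.
apply/matrixP => i j; rewrite !mxE !Jmx_entry addnC.
have hi := ltn_ord i; have hj := ltn_ord j.
case: ifP => /eqP E //; last by rewrite oppr0.
by case: ifP => a; case: ifP => b; rewrite ?opprK //; lia.
Qed.

Lemma Jmx_sqr : J *m J = - 1%:M.
Proof.
apply: eq_mulmx_evec => k kN; rewrite -mulmxA Jmx_evec // -scalemxAr Jmx_evec; last lia.
rewrite scalerA Jsign_rev // mulNmx mul1mx (_ : N.-1 - (N.-1 - k) = k)%N; last lia.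
rewrite mulrN scaleNr (_ : Jsign k * Jsign k = 1) ?scale1r //.
by rewrite /Jsign; case: ifP => _; rewrite ?mulrNN mulr1.
Qed.

Lemma sform_anti x y : sform x y = - sform y x.
Proof.
have E : (x^T *m J *m y)^T = - (y^T *m J *m x).
  by rewrite !trmx_mul trmxK trmx_Jmx mulNmx mulmxN mulmxA.
rewrite /sform; transitivity ((x^T *m J *m y)^T 0 0); first by rewrite [RHS]mxE.
by rewrite E mxE.
Qed.

Lemma sform_eq0_sym x y : sform x y = 0 -> sform y x = 0.
Proof. by rewrite sform_anti => /eqP; rewrite oppr_eq0 => /eqP. Qed.

Lemma sformDr x y z : sform x (y + z) = sform x y + sform x z.
Proof. by rewrite /sform mulmxDr mxE. Qed.
Lemma sformZr x c y : sform x (c *: y) = c * sform x y.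
Proof. by rewrite /sform -scalemxAr mxE. Qed.
Lemma sformNr x y : sform x (- y) = - sform x y.
Proof. by rewrite -scaleN1r sformZr mulN1r. Qed.
Lemma sformDl x y z : sform (x + y) z = sform x z + sform y z.
Proof. by rewrite sform_anti sformDr opprD -!sform_anti. Qed.
Lemma sformZl c x y : sform (c *: x) y = c * sform x y.
Proof. by rewrite sform_anti sformZr -mulrN -sform_anti. Qed.
Lemma sformNl x y : sform (- x) y = - sform x y.
Proof. by rewrite -scaleN1r sformZl mulN1r. Qed.
Lemma sform0r x : sform x 0 = 0.
Proof. by rewrite /sform mulmx0 mxE. Qed.
Lemma sform0l x : sform 0 x = 0.
Proof. by rewrite sform_anti sform0r oppr0. Qed.

Definition sformE := (sformDl, sformDr, sformZl, sformZr, sformNl, sformNr, sform0l, sform0r).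

Lemma sform_evecr x k : (k < N)%N -> sform x (evec k) = Jsign k * coord x (N.-1 - k).
Proof.
move=> kN; rewrite /sform -mulmxA Jmx_evec // -scalemxAr mxE mxE.
rewrite (bigD1 (ordN (N.-1 - k))) //= big1 ?addr0.
  by rewrite mxE evecE ordNK ?eqxx ?mulr1 ?mxE //; lia.
move=> l /negbTE lk; rewrite evecE.
have -> : ((l : nat) == N.-1 - k)%N = false.
  by apply/negbTE; apply: contraFN lk => /eqP <-; rewrite ordN_val.
by rewrite mulr0.
Qed.

Lemma sform_evecl x k : (k < N)%N -> sform (evec k) x = - Jsign k * coord x (N.-1 - k).
Proof. by move=> kN; rewrite sform_anti sform_evecr // mulNr. Qed.

Lemma mxE_evec (M : 'M[F]_N) a b : (a < N)%N -> (b < N)%N ->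
  ((evec a)^T *m M *m evec b) 0 0 = M (ordN a) (ordN b).
Proof.
move=> aN bN; rewrite mulmx_evec // mxE (bigD1 (ordN a)) //= big1 ?addr0.
  by rewrite !mxE ordNK // eqxx mul1r.
move=> l /negbTE la; rewrite !mxE.
have -> : ((l : nat) == a) = false.
  by apply/negbTE; apply: contraFN la => /eqP <-; rewrite ordN_val.
by rewrite mul0r.
Qed.

Lemma sform_evec a b : (a < N)%N -> (b < N)%N ->
  sform (evec a) (evec b) = if (a + b == N.-1)%N then (if (a < n)%N then 1 else -1) else 0.
Proof. by move=> aN bN; rewrite /sform mxE_evec // Jmx_entry !ordNK. Qed.

Lemma sform_evec_eq0 a b : (a < N)%N -> (b < N)%N -> (a + b <> N.-1)%N ->
  sform (evec a) (evec b) = 0.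
Proof. by move=> aN bN /eqP/negbTE ab; rewrite sform_evec // ab. Qed.

(* [J] is alternating in every characteristic: the terms of [x^T J x] cancel in
   antipodal pairs [k], [N-1-k]. *)
Lemma sform_self x : sform x x = 0.
Proof.
have row_entry (j : 'I_N) : (x^T *m J) 0 j = Jsign j * coord x (N.-1 - j).
  have := mulmx_evec (x^T *m J) 0 0 (ltn_ord j); rewrite ordN_val => <-.
  exact: (sform_evecr x (ltn_ord j)).
rewrite /sform mxE.
have coord_ord (j : 'I_N) : x j 0 = coord x j by rewrite /coord ordN_val.
under eq_bigr => j _ do rewrite row_entry coord_ord.
rewrite -(big_mkord xpredT (fun k => Jsign k * coord x (N.-1 - k) * coord x k)).
apply: sum_antipodal => k kN; rewrite Jsign_rev // (_ : N.-1 - (N.-1 - k) = k)%N; last lia.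
by rewrite mulNr mulrAC mulNr.
Qed.

Lemma sform_mulmx (X : 'M[F]_N) x y :
  sform (X *m x) (X *m y) = (x^T *m (X^T *m J *m X) *m y) 0 0.
Proof. by rewrite /sform trmx_mul !mulmxA. Qed.

Lemma inSp_evec (X : 'M[F]_N) :
  (forall a b, (a < N)%N -> (b < N)%N ->
    sform (X *m evec a) (X *m evec b) = sform (evec a) (evec b)) -> inSp X.
Proof.
move=> XJ; apply/matrixP => i j.
by have := XJ i j (ltn_ord i) (ltn_ord j); rewrite sform_mulmx /sform !mxE_evec // !ordN_val.
Qed.

Lemma inSpP (X : 'M[F]_N) : inSp X <-> (forall x y, sform (X *m x) (X *m y) = sform x y).
Proof.
split=> [XJ x y|XJ]; first by rewrite sform_mulmx XJ.
by apply: inSp_evec => a b _ _; exact: XJ.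
Qed.

Lemma inSp_sform (X : 'M[F]_N) x y : inSp X -> sform (X *m x) (X *m y) = sform x y.
Proof. by move/inSpP. Qed.

Lemma inSp1 : inSp (1%:M : 'M[F]_N).
Proof. by apply/inSpP => x y; rewrite !mul1mx. Qed.

Lemma inSpM (X Y : 'M[F]_N) : inSp X -> inSp Y -> inSp (X *m Y).
Proof.
move=> spX spY; apply/inSpP => x y.
by rewrite -!mulmxA (inSp_sform _ _ spX) (inSp_sform _ _ spY).
Qed.

Lemma inSp_unit (X : 'M[F]_N) : inSp X -> X \in unitmx.
Proof.
move=> spX; have E : (- J *m X^T *m J) *m X = 1%:M.
  by rewrite -!mulmxA (mulmxA X^T) spX mulNmx Jmx_sqr opprK.
by case: (mulmx1_unit E).
Qed.

Lemma inSpV (X : 'M[F]_N) : inSp X -> inSp (invmx X).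
Proof.
move=> spX; apply/inSpP => x y.
by rewrite -(inSp_sform _ _ spX) !mulmxA mulmxV ?inSp_unit // !mul1mx.
Qed.

Lemma conj_intertwine (g A B : 'M[F]_N) :
  g \in unitmx -> g *m A = B *m g -> B = g *m A *m invmx g.
Proof. by move=> gU ->; rewrite -mulmxA mulmxV // mulmx1. Qed.

Definition transv (v : 'cV[F]_N) (a : F) : 'M[F]_N :=
  1%:M + a *: (v *m (v^T *m J)).
Definition siegel (u w : 'cV[F]_N) (t : F) : 'M[F]_N :=
  1%:M + t *: (u *m (w^T *m J) + w *m (u^T *m J)).

Lemma rank1_mulmx (u w x : 'cV[F]_N) : u *m (w^T *m J) *m x = sform w x *: u.
Proof. by rewrite -mulmxA [w^T *m J *m x]mx11_scalar mul_mx_scalar. Qed.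

Lemma transvE v a x : transv v a *m x = x + (a * sform v x) *: v.
Proof. by rewrite /transv mulmxDl mul1mx -scalemxAl rank1_mulmx scalerA. Qed.

Lemma siegelE u w t x :
  siegel u w t *m x = x + (t * sform w x) *: u + (t * sform u x) *: w.
Proof.
by rewrite /siegel mulmxDl mul1mx -scalemxAl mulmxDl !rank1_mulmx scalerDr !scalerA addrA.
Qed.

Lemma transv_conj (g : 'M[F]_N) v a : inSp g -> g *m transv v a = transv (g *m v) a *m g.
Proof.
move=> spg; apply: eq_mulmx_evec => k _.
by rewrite -!mulmxA !transvE !mulmxDr -!scalemxAr !(inSp_sform _ _ spg).
Qed.

Lemma siegel_conj (g : 'M[F]_N) u w t :
  inSp g -> g *m siegel u w t = siegel (g *m u) (g *m w) t *m g.
Proof.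
move=> spg; apply: eq_mulmx_evec => k _.
by rewrite -!mulmxA !siegelE !mulmxDr -!scalemxAr !(inSp_sform _ _ spg).
Qed.

Lemma transvN v a : transv (- v) a = transv v a.
Proof.
apply: eq_mulmx_evec => k _; rewrite !transvE !sformE.
by apply/matrixP => i j; rewrite !mxE; ring.
Qed.

Lemma transv0 v : transv v 0 = 1%:M.
Proof. by rewrite /transv scale0r addr0. Qed.

Lemma transv_move u w : sform w u != 0 -> transv (w - u) (sform w u)^-1 *m u = w.
Proof.
move=> wu; rewrite transvE sformDl sformNl sform_self subr0 mulVf //.
by rewrite scale1r addrC subrK.
Qed.

Lemma transv_fix v a x : sform v x = 0 -> transv v a *m x = x.
Proof. by move=> vx; rewrite transvE vx mulr0 scale0r addr0. Qed.

Lemma siegel_fix u w t x : sform u x = 0 -> sform w x = 0 -> siegel u w t *m x = x.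
Proof. by move=> ux wx; rewrite siegelE ux wx !mulr0 !scale0r !addr0. Qed.

Lemma inSp_siegel u w t : sform u w = 0 -> inSp (siegel u w t).
Proof.
move=> uw; apply/inSpP => x y; rewrite !siegelE !sformE !sform_self.
by rewrite uw (sform_eq0_sym uw) (sform_anti x u) (sform_anti x w); ring.
Qed.

Lemma siegelC u w t : siegel u w t = siegel w u t.
Proof. by rewrite /siegel [u *m _ + _]addrC. Qed.

Lemma siegelZl c u w t : siegel (c *: u) w t = siegel u w (c * t).
Proof.
apply: eq_mulmx_evec => k _; rewrite !siegelE !sformE.
by apply/matrixP => i j; rewrite !mxE; ring.
Qed.

Lemma siegelZr c u w t : siegel u (c *: w) t = siegel u w (c * t).
Proof. by rewrite siegelC siegelZl siegelC. Qed.

Lemma siegelN u w t : siegel u (- w) t = siegel u w (- t).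
Proof. by rewrite -scaleN1r siegelZr mulN1r. Qed.

Lemma siegel0 u w : siegel u w 0 = 1%:M.
Proof. by rewrite /siegel scale0r addr0. Qed.

Lemma siegelD u w s t : sform u w = 0 -> siegel u w s *m siegel u w t = siegel u w (s + t).
Proof.
move=> uw; have wu := sform_eq0_sym uw.
apply: eq_mulmx_evec => k _; rewrite -mulmxA !siegelE !sformE !sform_self ?uw ?wu.
by apply/matrixP => i j; rewrite !mxE; ring.
Qed.

Lemma siegelDr u w w' t : sform u w = 0 -> sform u w' = 0 -> sform w w' = 0 ->
  siegel u (w + w') t = siegel u w t *m siegel u w' t.
Proof.
move=> uw uw' ww'; have wu := sform_eq0_sym uw; have w'u := sform_eq0_sym uw'.
have w'w := sform_eq0_sym ww'.
apply: eq_mulmx_evec => k _; rewrite -mulmxA !siegelE !sformE !sform_self.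
rewrite ?uw ?wu ?uw' ?w'u ?ww' ?w'w.
by apply/matrixP => i j; rewrite !mxE; ring.
Qed.

Lemma siegel_commutator u w w' s t : sform u w = 0 -> sform u w' = 0 ->
  transv u (2 * s * t * sform w w') =
  siegel u w (- s) *m siegel u w' (- t) *m siegel u w s *m siegel u w' t.
Proof.
move=> uw uw'; have wu := sform_eq0_sym uw; have w'u := sform_eq0_sym uw'.
have w'w : sform w' w = - sform w w' by rewrite sform_anti.
apply: eq_mulmx_evec => k _; rewrite -!mulmxA transvE !siegelE !sformE !sform_self.
rewrite ?uw ?wu ?uw' ?w'u ?w'w.
by apply/matrixP => i j; rewrite !mxE; ring.
Qed.

Lemma coord_transv_evec_off k c y i : (i < N)%N -> i != k ->
  coord (transv (evec k) c *m y) i = coord y i.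
Proof.
by move=> iN ik; rewrite transvE !coordE coord_evec // (negbTE ik) mulr0 addr0.
Qed.

Lemma coord_transv_evec k c y : (k < N)%N ->
  coord (transv (evec k) c *m y) k = coord y k - c * Jsign k * coord y (N.-1 - k).
Proof.
by move=> kN; rewrite transvE !coordE coord_evec // eqxx sform_evecl //=; ring.
Qed.

Lemma coord_siegel_evec_off a b t y i : (i < N)%N -> i != a -> i != b ->
  coord (siegel (evec a) (evec b) t *m y) i = coord y i.
Proof.
move=> iN ia ib; rewrite siegelE !coordE !coord_evec //.
by rewrite (negbTE ia) (negbTE ib) !mulr0 !addr0.
Qed.

Lemma coord_siegel_evec a b t y : (a < N)%N -> (b < N)%N -> a != b ->
  coord (siegel (evec a) (evec b) t *m y) a = coord y a - t * Jsign b * coord y (N.-1 - b).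
Proof.
move=> aN bN ab; rewrite siegelE !coordE !coord_evec // eqxx (negbTE ab).
by rewrite sform_evecl //=; ring.
Qed.

Definition fixes_first k (X : 'M[F]_N) := forall i, (i < k)%N ->
  X *m evec i = evec i /\ X *m evec (N.-1 - i) = evec (N.-1 - i).
Definition orth_first k (v : 'cV[F]_N) := forall i, (i < k)%N ->
  sform v (evec i) = 0 /\ sform v (evec (N.-1 - i)) = 0.

Lemma orth_firstD k u v : orth_first k u -> orth_first k v -> orth_first k (u + v).
Proof.
move=> ou ov i ik; case: (ou i ik) => a b; case: (ov i ik) => c d.
by rewrite !sformDl a b c d addr0.
Qed.

Lemma orth_firstN k u : orth_first k u -> orth_first k (- u).
Proof. by move=> ou i ik; case: (ou i ik) => a b; rewrite !sformNl a b oppr0. Qed.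

Lemma orth_firstB k u v : orth_first k u -> orth_first k v -> orth_first k (u - v).
Proof. by move=> ou ov; apply: orth_firstD => //; exact: orth_firstN. Qed.

Lemma orth_first_mulmx k g v :
  inSp g -> fixes_first k g -> orth_first k v -> orth_first k (g *m v).
Proof.
move=> spg fg ov i ik; case: (fg i ik) => a b.
by rewrite -{1}a -{1}b !(inSp_sform _ _ spg); exact: ov.
Qed.

Lemma orth_first_nondeg k u : (k <= n)%N -> orth_first k u -> u != 0 ->
  exists2 z, orth_first k z & sform u z != 0.
Proof.
move=> kn ou u0; have [l lN ul] := exists_coord_neq0 u0.
have rev_l : (N.-1 - (N.-1 - l) = l)%N by lia.
exists (evec (N.-1 - l)); last by rewrite sform_evecr ?rev_l ?mulf_neq0 ?Jsign_neq0 //; lia.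
move=> i ik; split; rewrite sform_evec; try lia; case: ifP => // /eqP E.
- have [_] := ou i ik; rewrite sform_evecr; last lia.
  rewrite (_ : N.-1 - (N.-1 - i) = l)%N; last lia.
  by move/eqP; rewrite mulf_eq0 (negbTE (Jsign_neq0 _)) (negbTE ul).
- have [] := ou i ik; rewrite sform_evecr; last lia.
  rewrite (_ : N.-1 - i = l)%N; last lia.
  by move/eqP; rewrite mulf_eq0 (negbTE (Jsign_neq0 _)) (negbTE ul).
Qed.

Lemma fixes_first_eq1 Y : fixes_first n Y -> Y = 1%:M.
Proof.
move=> fY; apply: eq_mulmx_evec => l lN; rewrite mul1mx.
case: (ltnP l n) => ln; first by case: (fY l ln).
have [_] := fY (N.-1 - l)%N (ltac:(lia)).
by rewrite (_ : (N.-1 - (N.-1 - l) = l)%N) //; lia.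
Qed.

Definition sp_subgroup (H : 'M[F]_N -> Prop) : Prop :=
  [/\ forall X Y, H X -> H Y -> H (X *m Y), forall X, H X -> H (invmx X)
    & forall X, H X -> inSp X].

Section SpSubgroup.
Variable H : 'M[F]_N -> Prop.
Hypothesis spgH : sp_subgroup H.

Lemma spgM X Y : H X -> H Y -> H (X *m Y).
Proof. by case: spgH => M _ _; exact: M. Qed.
Lemma spgV X : H X -> H (invmx X).
Proof. by case: spgH => _ V _; exact: V. Qed.
Lemma spg_inSp X : H X -> inSp X.
Proof. by case: spgH => _ _ S; exact: S. Qed.
Lemma spg_unit X : H X -> X \in unitmx.
Proof. by move/spg_inSp/inSp_unit. Qed.

Lemma spg_conj g Y : H g -> H Y -> H (g *m Y *m invmx g).
Proof. by move=> Hg HY; apply: spgM; [exact: spgM|exact: spgV]. Qed.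

Lemma spg_siegel_conj g u w t :
  H g -> H (siegel u w t) -> H (siegel (g *m u) (g *m w) t).
Proof.
move=> Hg HQ; rewrite (conj_intertwine (spg_unit Hg) (siegel_conj u w t (spg_inSp Hg))).
exact: spg_conj.
Qed.

Lemma spg_transv_conj g v a : H g -> H (transv v a) -> H (transv (g *m v) a).
Proof.
move=> Hg HT; rewrite (conj_intertwine (spg_unit Hg) (transv_conj v a (spg_inSp Hg))).
exact: spg_conj.
Qed.

Lemma spg_transv_pull g x :
  H g -> (forall c, H (transv (g *m x) c)) -> forall c, H (transv x c).
Proof.
move=> Hg HT c; have := spg_transv_conj (spgV Hg) (HT c).
by rewrite mulmxA mulVmx ?mul1mx // spg_unit.
Qed.

Section TransvectionsGenerate.
Hypothesis spg_transv : forall v a, H (transv v a).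

Definition stab k g := H g /\ fixes_first k g.

Lemma stab_transv k v a : orth_first k v -> stab k (transv v a).
Proof.
move=> ov; split=> // i ik; case: (ov i ik) => vi vi'.
by rewrite !transv_fix.
Qed.

Lemma stabM k g1 g2 : stab k g1 -> stab k g2 -> stab k (g1 *m g2).
Proof.
move=> [H1 f1] [H2 f2]; split; first exact: spgM.
move=> i ik; case: (f1 i ik) => a b; case: (f2 i ik) => c d.
by rewrite -!mulmxA c d a b.
Qed.

Lemma stab_orth_first k g v : stab k g -> orth_first k v -> orth_first k (g *m v).
Proof. by case=> Hg fg; apply: orth_first_mulmx => //; exact: spg_inSp. Qed.

Lemma stab_move k u w : orth_first k u -> orth_first k w -> sform w u != 0 ->
  exists2 g, stab k g & g *m u = w.
Proof.
move=> ou ow wu; exists (transv (w - u) (sform w u)^-1); last exact: transv_move.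
by apply: stab_transv; exact: orth_firstB.
Qed.

(* If [sform w u = 0], pass through an auxiliary [z] with [sform z u] and
   [sform w z] both nonzero. *)
Lemma stab_transitive k u w : (k <= n)%N -> orth_first k u -> orth_first k w ->
  u != 0 -> w != 0 -> exists2 g, stab k g & g *m u = w.
Proof.
move=> kn ou ow u0 w0.
have [wu|wu] := eqVneq (sform w u) 0; last exact: stab_move.
have [z [oz [uz zw]]] : exists z, orth_first k z /\ sform z u != 0 /\ sform w z != 0.
  have [z1 oz1 uz1] := orth_first_nondeg kn ou u0.
  have [z2 oz2 wz2] := orth_first_nondeg kn ow w0.
  have [e1|e1] := eqVneq (sform w z1) 0; last first.
    by exists z1; split=> //; split=> //; rewrite sform_anti oppr_eq0.
  have [e2|e2] := eqVneq (sform u z2) 0; last first.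
    by exists z2; split=> //; split=> //; rewrite sform_anti oppr_eq0.
  exists (z1 + z2); split; first exact: orth_firstD.
  split; first by rewrite sformDl (sform_anti z1) (sform_anti z2) e2 oppr0 addr0 oppr_eq0.
  by rewrite sformDr e1 add0r.
have [g1 sg1 E1] := stab_move ou oz uz.
have [g2 sg2 E2] := stab_move oz ow zw.
by exists (g2 *m g1); [exact: stabM|rewrite -mulmxA E1].
Qed.

Lemma stab_transitive_fix k w w' u : orth_first k w -> orth_first k w' -> orth_first k u ->
  sform w w' = 1 -> sform w u = 1 ->
  exists2 g, stab k g & g *m w = w /\ g *m u = w'.
Proof.
move=> ow ow' ou ww' wu.
have w'w : sform w' w = -1 by rewrite sform_anti ww'.
have uw : sform u w = -1 by rewrite sform_anti wu.
have [e|e] := eqVneq (sform w' u) 0; last first.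
  exists (transv (w' - u) (sform w' u)^-1).
    by apply: stab_transv; exact: orth_firstB.
  split; last exact: transv_move.
  by apply: transv_fix; rewrite sformDl sformNl w'w uw opprK addNr.
pose z := u + w.
have e2 : sform w' z != 0 by rewrite sformDr e w'w add0r oppr_eq0 oner_eq0.
exists (transv (w' - z) (sform w' z)^-1 *m transv w 1).
  by apply: stabM; apply: stab_transv => //; apply: orth_firstB => //; exact: orth_firstD.
split.
  rewrite -mulmxA (transv_fix _ (sform_self w)); apply: transv_fix.
  by rewrite sformDl sformNl w'w /z sformDl uw sform_self addr0 opprK addNr.
by rewrite -mulmxA (transvE w) wu mulr1 scale1r -/z; exact: transv_move.
Qed.

Lemma stab_transitive_pair k u u' w w' : (k <= n)%N ->
  orth_first k u -> orth_first k u' -> orth_first k w -> orth_first k w' ->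
  sform u u' = 1 -> sform w w' = 1 ->
  exists2 g, stab k g & g *m u = w /\ g *m u' = w'.
Proof.
move=> kn ou ou' ow ow' uu' ww'.
have nz x y : sform x y = 1 -> x != 0.
  by move=> xy; apply: contra_eq_neq xy => ->; rewrite sform0l eq_sym oner_neq0.
have [g1 sg1 E1] := stab_transitive kn ou ow (nz _ _ uu') (nz _ _ ww').
have wu' : sform w (g1 *m u') = 1.
  by rewrite -E1 (inSp_sform _ _ (spg_inSp (proj1 sg1))).
have [g2 sg2 [E2 E2']] := stab_transitive_fix ow ow' (stab_orth_first sg1 ou') ww' wu'.
by exists (g2 *m g1); [exact: stabM|rewrite -!mulmxA E1 E2 E2'].
Qed.

Lemma stab_extend k Y : (k < n)%N -> inSp Y -> fixes_first k Y ->
  exists2 g, stab k g & fixes_first k.+1 (g *m Y).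
Proof.
move=> kn spY fY.
have orth_evec l : (k <= l)%N -> (l < N - k)%N -> orth_first k (evec l).
  move=> kl lk i ik; rewrite !sform_evec; try lia.
  by split; case: ifP => // /eqP; lia.
have orthY l : (k <= l)%N -> (l < N - k)%N -> orth_first k (Y *m evec l).
  by move=> kl lk; apply: orth_first_mulmx spY fY _; exact: orth_evec.
have kk' : sform (evec k) (evec (N.-1 - k)) = 1.
  rewrite sform_evec ?kn; try lia.
  by rewrite (_ : (k + (N.-1 - k) == N.-1)%N) //; apply/eqP; lia.
have [g [Hg fg] [E E']] := stab_transitive_pair (ltnW kn)
  (orthY k (leqnn k) (ltac:(lia))) (orthY (N.-1 - k)%N (ltac:(lia)) (ltac:(lia)))
  (orth_evec k (leqnn k) (ltac:(lia))) (orth_evec (N.-1 - k)%N (ltac:(lia)) (ltac:(lia)))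
  (etrans (inSp_sform _ _ spY) kk') kk'.
exists g => // i; rewrite ltnS leq_eqVlt => /orP [/eqP ->|ik].
  by rewrite -!mulmxA E E'.
by case: (fY i ik) => a b; case: (fg i ik) => c d; rewrite -!mulmxA a b c d.
Qed.

Lemma inSp_spg X : inSp X -> H X.
Proof.
suff fixing_gen m : (m <= n)%N -> forall Y, inSp Y -> fixes_first (n - m) Y -> H Y.
  by move=> spX; apply: (fixing_gen n (leqnn n)) => // i; rewrite subnn.
elim: m => [|m IH] mn Y spY fY.
  rewrite subn0 in fY; rewrite (fixes_first_eq1 fY) -(transv0 0); exact: spg_transv.
have [g [Hg _] fgY] := stab_extend (ltac:(lia) : (n - m.+1 < n)%N) spY fY.
have HgY : H (g *m Y).
  apply: (IH (ltnW mn)); first exact: inSpM (spg_inSp Hg) spY.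
  by rewrite (_ : n - m = (n - m.+1).+1)%N //; lia.
rewrite -[Y]mul1mx -(mulVmx (spg_unit Hg)) -mulmxA.
by apply: spgM => //; exact: spgV.
Qed.

End TransvectionsGenerate.

Section TransvectionsFromBasis.
Hypothesis spg_transv_evec : forall k c, (k < N)%N -> H (transv (evec k) c).
Hypothesis spg_siegel_evec :
  forall j t, (1 <= j < n)%N -> H (siegel (evec 0) (evec (N.-1 - j)) t).

Definition reduced j x := coord x N.-1 = 1 /\
  forall i, (j <= i < n)%N -> coord x i = 0 /\ coord x (N.-1 - i) = 0.

Lemma reduced1_evec x : reduced 1 x -> transv (evec 0) (- coord x 0) *m x = evec N.-1.
Proof.
case=> xL x0; have N_gt0 : (0 < N)%N by lia.
apply: eq_coord => k kN; have [->|/eqP k0] := eqVneq k 0%N.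
  rewrite coord_transv_evec // Jsign_lo // subn0 xL coord_evec //.
  by rewrite (_ : (0 == N.-1)%N = false) /=; [ring|apply/negbTE/eqP; lia].
rewrite coord_transv_evec_off ?coord_evec //; last exact/eqP.
have [->|/eqP kL] := eqVneq k N.-1; first by rewrite xL.
case: (ltnP k n) => kn; first by have [->] := x0 k (ltac:(lia)).
have [_] := x0 (N.-1 - k)%N (ltac:(lia)).
by rewrite (_ : (N.-1 - (N.-1 - k) = k)%N) //; lia.
Qed.

Lemma reduced_step j x : (1 <= j < n)%N -> reduced j.+1 x ->
  exists2 g, H g & reduced j (g *m x).
Proof.
move=> jn [xL xz].
exists (siegel (evec 0) (evec (N.-1 - j)) (-1) *m transv (evec j) (- coord x j) *m
        siegel (evec 0) (evec (N.-1 - j)) (1 - coord x (N.-1 - j))).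
  apply: spgM; first apply: spgM.
  - exact: spg_siegel_evec.
  - by apply: spg_transv_evec; lia.
  - exact: spg_siegel_evec.
rewrite -!mulmxA.
set y1 := siegel _ _ _ *m x; set y2 := transv _ _ *m y1; set y3 := siegel _ _ _ *m y2.
have off1 i : (i < N)%N -> i <> 0%N -> i <> (N.-1 - j)%N -> coord y1 i = coord x i.
  by move=> iN /eqP ? /eqP ?; exact: coord_siegel_evec_off.
have off2 i : (i < N)%N -> i <> j -> coord y2 i = coord y1 i.
  by move=> iN /eqP ?; exact: coord_transv_evec_off.
have off3 i : (i < N)%N -> i <> 0%N -> i <> (N.-1 - j)%N -> coord y3 i = coord y2 i.
  by move=> iN /eqP ? /eqP ?; exact: coord_siegel_evec_off.
have y1_j' : coord y1 (N.-1 - j) = 1.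
  rewrite /y1 siegelC coord_siegel_evec; [|lia|lia|apply/eqP; lia].
  by rewrite Jsign_lo // subn0 xL; ring.
have y2_j : coord y2 j = 0.
  rewrite /y2 coord_transv_evec; last lia.
  by rewrite Jsign_lo; [rewrite y1_j' off1; [ring|lia..]|lia].
have y3_j' : coord y3 (N.-1 - j) = 0.
  rewrite /y3 siegelC coord_siegel_evec; [|lia|lia|apply/eqP; lia].
  by rewrite Jsign_lo // subn0 !off2 ?y1_j' ?off1 ?xL; [ring|lia..].
split; first by rewrite off3 ?off2 ?off1 ?xL //; lia.
move=> i /andP [ji iN]; have [<-|/eqP ij] := eqVneq j i.
  by rewrite y3_j' off3 ?y2_j //; lia.
have [xi xi'] := xz i (ltac:(lia)).
by rewrite !off3 ?off2 ?off1 ?xi ?xi' //; lia.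
Qed.

Lemma reduced_to_last j x : (1 <= j <= n)%N -> reduced j x ->
  exists2 g, H g & g *m x = evec N.-1.
Proof.
elim: j x => [|j IH] x jn xr; first lia.
have [j0|j_gt0] := posnP j.
  rewrite j0 in xr; exists (transv (evec 0) (- coord x 0)); last exact: reduced1_evec.
  by apply: spg_transv_evec; lia.
have [g Hg gx] := reduced_step (ltac:(lia) : (1 <= j < n)%N) xr.
have [g' Hg' g'gx] := IH _ (ltac:(lia) : (1 <= j <= n)%N) gx.
by exists (g' *m g); [exact: spgM|rewrite -mulmxA].
Qed.

Lemma exists_last_coord1 x : x != 0 -> exists2 g, H g & coord (g *m x) N.-1 = 1.
Proof.
pose P y := exists2 g, H g & coord (g *m y) N.-1 = 1.
have pull g y : H g -> P (g *m y) -> P y.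
  by move=> Hg [g' Hg' E]; exists (g' *m g); [exact: spgM|rewrite -mulmxA].
have LN : (N.-1 < N)%N by lia.
have at0 y : coord y 0 != 0 -> P y.
  move=> y0; exists (transv (evec N.-1) ((coord y N.-1 - 1) / coord y 0)).
    exact: spg_transv_evec.
  by rewrite coord_transv_evec // Jsign_hi ?subnn; [field|lia].
have atL y : coord y N.-1 != 0 -> P y.
  move=> yL; apply: (pull (transv (evec 0) ((1 - coord y 0) / coord y N.-1))).
    by apply: spg_transv_evec; lia.
  apply: at0; rewrite coord_transv_evec; last lia.
  rewrite Jsign_lo // subn0.
  have -> : coord y 0 - (1 - coord y 0) / coord y N.-1 * -1 * coord y N.-1 = 1 by field.
  exact: oner_neq0.
have at_lo y l : (1 <= l < n)%N -> coord y l != 0 -> P y.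
  move=> ln yl; apply: (pull (siegel (evec 0) (evec (N.-1 - l)) ((coord y 0 - 1) / coord y l))).
    exact: spg_siegel_evec.
  apply: at0; rewrite coord_siegel_evec; [|lia|lia|apply/eqP; lia].
  rewrite Jsign_hi; last lia.
  rewrite (_ : N.-1 - (N.-1 - l) = l)%N; last lia.
  have -> : coord y 0 - (coord y 0 - 1) / coord y l * 1 * coord y l = 1 by field.
  exact: oner_neq0.
have at_hi y l : (1 <= l < n)%N -> coord y (N.-1 - l) != 0 -> P y.
  move=> ln yl; apply: (pull (transv (evec l) ((1 - coord y l) / coord y (N.-1 - l)))).
    by apply: spg_transv_evec; lia.
  apply: (at_lo _ l ln); rewrite coord_transv_evec; last lia.
  rewrite Jsign_lo; last lia.
  have -> : coord y l - (1 - coord y l) / coord y (N.-1 - l) * -1 * coord y (N.-1 - l) = 1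
    by field.
  exact: oner_neq0.
move=> x0; have [k kN xk] := exists_coord_neq0 x0.
have [k0|/eqP k0] := eqVneq k 0%N; first by apply: at0; rewrite -k0.
have [kL|/eqP kL] := eqVneq k N.-1; first by apply: atL; rewrite -kL.
case: (ltnP k n) => kn; first by apply: (at_lo _ k) => //; lia.
apply: (at_hi _ (N.-1 - k)%N); first lia.
by rewrite (_ : (N.-1 - (N.-1 - k) = k)%N) //; lia.
Qed.

Lemma spg_transv_all v a : H (transv v a).
Proof.
have [->|v0] := eqVneq v 0.
  rewrite /transv mul0mx scaler0 addr0 -(transv0 (evec 0)).
  by apply: spg_transv_evec; lia.
have [g Hg gL] := exists_last_coord1 v0.
have [g' Hg' E] : exists2 g', H g' & g' *m (g *m v) = evec N.-1.
  by apply: (@reduced_to_last n); [lia|split=> // i; lia].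
apply: (spg_transv_pull (spgM Hg' Hg)) => c; rewrite -mulmxA E.
by apply: spg_transv_evec; lia.
Qed.

End TransvectionsFromBasis.

End SpSubgroup.

Lemma Emx_evec a b i : (i < N)%N -> Emx F n a b *m evec i = (i == b)%:R *: evec a.
Proof.
move=> iN; apply/matrixP => r c; rewrite mulmx_evec // !mxE ordNK //.
by case: (r == a :> nat); case: (i == b); rewrite ?mulr1 ?mulr0 ?mul0r.
Qed.

Lemma hmx_evec k a i : (i < N)%N ->
  hmx n k a *m evec i = (if i == k then a else 1) *: evec i.
Proof.
move=> iN; rewrite /hmx mulmxDl mul1mx -scalemxAl Emx_evec //.
case: eqP => [->|_]; last by rewrite scale0r scaler0 addr0 scale1r.
by rewrite scale1r -[X in X + _]scale1r -scalerDl addrC subrK.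
Qed.

Section Generators.
Hypothesis n_gt1 : (1 < n)%N.
Variable xi : F.
Hypothesis xi_neq0 : xi != 0.
Local Notation h := (hat_h1 n xi).
Local Notation W := (hat_w F n).

Definition h1_weight (i : nat) : F :=
  if i == 0%N then xi else if i == N.-1 then xi^-1 else 1.

Lemma hat_h1_evec i : (i < N)%N -> h *m evec i = h1_weight i *: evec i.
Proof.
move=> iN; rewrite /hat_h1 -mulmxA hmx_evec // -scalemxAr hmx_evec // scalerA /h1_weight.
case: eqP => [->|i0]; last by rewrite mul1r.
by rewrite (_ : (N.-1 == 0%N) = false) ?mulr1 //; lia.
Qed.

Lemma inSp_hat_h1 : inSp h.
Proof.
apply: inSp_evec => a b aN bN.
rewrite !hat_h1_evec // sformZl sformZr !sform_evec //.
case: ifP => /eqP E; last by rewrite !mulr0.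
rewrite /h1_weight.
have [a0|a0] := eqVneq a 0%N; have [b0|b0] := eqVneq b 0%N;
  have [aL|aL] := eqVneq a N.-1; have [bL|bL] := eqVneq b N.-1; try lia;
  rewrite ?mul1r //.
- by rewrite mulrA mulfV // mul1r.
- by rewrite mulrA mulVf // mul1r.
Qed.

(* [hat_w] maps [evec k] to [wsign k *: evec (wperm k)]: the cycle
   [0 -> 1 -> ... -> n-1 -> N-1 -> N-2 -> ... -> n -> 0] with one sign change. *)
Definition wperm (k : nat) : nat :=
  if (k < n.-1)%N then k.+1 else if k == n.-1 then N.-1 else if k == n then 0%N else k.-1.
Definition wsign (k : nat) : F := if k == n.-1 then -1 else 1.

Lemma wperm_lt k : (k < N)%N -> (wperm k < N)%N.
Proof. by rewrite /wperm => kN; case_ifs; lia. Qed.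

Lemma hat_w_evec k : (k < N)%N -> W *m evec k = wsign k *: evec (wperm k).
Proof.
move=> kN; apply/matrixP => i j; rewrite mulmx_evec // !mxE ordNK // /wsign /wperm.
have hi := ltn_ord i; move: (nat_of_ord i) hi => ii hi.
by case_ifs; rewrite ?mulr1 ?mul1r ?mulN1r ?mulr0 ?oppr0.
Qed.

Lemma inSp_hat_w : inSp W.
Proof.
apply: inSp_evec => a b aN bN.
rewrite !hat_w_evec // sformZl sformZr !sform_evec ?wperm_lt // /wperm /wsign.
by case_ifs; ring.
Qed.

Definition x12 (t : F) : 'M[F]_N := siegel (evec 0) (- evec N.-2) t.
Definition x12w (t : F) : 'M[F]_N := siegel (evec n) (- evec N.-1) t.
Definition h1w : 'M[F]_N := hmx n n xi *m hmx n n.-1 xi^-1.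

Lemma hat_x12_1E : hat_x12_1 F n = x12 1.
Proof.
apply: eq_mulmx_evec => k kN.
rewrite /x12 siegelE sformNl !sform_evec //; try lia.
rewrite /hat_x12_1 -mulmxA (mulmxDl 1%:M (Emx F n 0 1)) mul1mx.
rewrite (mulmxBl 1%:M) mul1mx Emx_evec // mulmxBr -scalemxAr !Emx_evec //; try lia.
apply/matrixP => i j; rewrite !mxE.
by move: (nat_of_ord i) => ii; case_ifs; ring.
Qed.

Lemma x12_isotropic : sform (evec 0) (- evec N.-2) = 0.
Proof. by rewrite sformNr sform_evec_eq0 ?oppr0 //; lia. Qed.

Lemma x12w_isotropic : sform (evec n) (- evec N.-1) = 0.
Proof. by rewrite sformNr sform_evec_eq0 ?oppr0 //; lia. Qed.

Lemma x12D s t : x12 s *m x12 t = x12 (s + t).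
Proof. exact: siegelD x12_isotropic. Qed.

Lemma x12wD s t : x12w s *m x12w t = x12w (s + t).
Proof. exact: siegelD x12w_isotropic. Qed.

Lemma hat_h1_x12 t : h *m x12 t = x12 (xi * t) *m h.
Proof.
rewrite siegel_conj; last exact: inSp_hat_h1.
rewrite mulmxN !hat_h1_evec; try lia.
rewrite /h1_weight eqxx (_ : (N.-2 == 0%N) = false); last by apply/negbTE/eqP; lia.
rewrite (_ : (N.-2 == N.-1) = false); last by apply/negbTE/eqP; lia.
by rewrite scale1r siegelZl.
Qed.

Lemma hat_h1_x12w t : h *m x12w t = x12w (xi^-1 * t) *m h.
Proof.
rewrite siegel_conj; last exact: inSp_hat_h1.
rewrite mulmxN !hat_h1_evec; try lia.
rewrite /h1_weight eqxx (_ : (n == 0%N) = false); last by apply/negbTE/eqP; lia.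
rewrite (_ : (n == N.-1) = false); last by apply/negbTE/eqP; lia.
rewrite (_ : (N.-1 == 0%N) = false); last by apply/negbTE/eqP; lia.
by rewrite scale1r -scalerN siegelZr.
Qed.

Lemma hat_w_x12w t : W *m x12w t = x12 t *m W.
Proof.
rewrite siegel_conj; last exact: inSp_hat_w.
rewrite mulmxN !hat_w_evec; try lia.
rewrite /wperm /wsign (_ : (n < n.-1)%N = false); last lia.
rewrite (_ : (n == n.-1) = false); last by apply/negbTE/eqP; lia.
rewrite eqxx scale1r (_ : (N.-1 < n.-1)%N = false); last lia.
rewrite (_ : (N.-1 == n.-1) = false); last by apply/negbTE/eqP; lia.
by rewrite (_ : (N.-1 == n) = false) ?scale1r //; apply/negbTE/eqP; lia.
Qed.

Lemma hat_w_h1w : W *m h1w = h *m W.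
Proof.
apply: eq_mulmx_evec => k kN.
rewrite /h1w -!mulmxA hmx_evec // -!scalemxAr hmx_evec // -!scalemxAr hat_w_evec //.
rewrite -scalemxAr hmx_evec ?wperm_lt // -!scalemxAr hmx_evec ?wperm_lt // !scalerA.
by rewrite /wperm /wsign; congr (_ *: _); case_ifs; ring.
Qed.

Lemma h1w_hat_h1 : h1w *m h = h *m h1w.
Proof.
apply: eq_mulmx_evec => k kN.
rewrite /h1w /hat_h1 -!mulmxA.
do 3 rewrite !hmx_evec // -!scalemxAr.
by rewrite !hmx_evec // !scalerA; congr (_ *: _); ring.
Qed.

Definition wpow (k : nat) : 'M[F]_N := iter k (mulmx W) 1%:M.

Lemma wpowS k : wpow k.+1 = W *m wpow k. Proof. by []. Qed.

Lemma wpow_e0 k : (k <= n.-1)%N -> wpow k *m evec 0 = evec k.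
Proof.
elim: k => [|k IH] kn; first by rewrite mul1mx.
rewrite wpowS -mulmxA IH; last lia.
rewrite hat_w_evec; last lia.
rewrite /wsign /wperm (_ : (k == n.-1)%N = false); last by apply/negbTE/eqP; lia.
by rewrite (_ : (k < n.-1)%N) ?scale1r //; lia.
Qed.

Lemma wpow_eN2 k : (k <= n.-2)%N -> wpow k *m evec N.-2 = evec (N.-2 - k).
Proof.
elim: k => [|k IH] kn; first by rewrite mul1mx subn0.
rewrite wpowS -mulmxA IH; last lia.
rewrite hat_w_evec; last lia.
rewrite /wsign /wperm (_ : (N.-2 - k == n.-1)%N = false); last by apply/negbTE/eqP; lia.
rewrite (_ : (N.-2 - k < n.-1)%N = false); last lia.
rewrite (_ : (N.-2 - k == n)%N = false); last by apply/negbTE/eqP; lia.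
by rewrite scale1r; congr evec; lia.
Qed.

Lemma wpow_eN2_last : wpow n.-1 *m evec N.-2 = evec 0.
Proof.
rewrite (_ : n.-1 = (n.-2).+1); last lia.
rewrite wpowS -mulmxA wpow_eN2 // hat_w_evec; last lia.
rewrite /wsign /wperm (_ : (N.-2 - n.-2 == n.-1)%N = false); last by apply/negbTE/eqP; lia.
rewrite (_ : (N.-2 - n.-2 < n.-1)%N = false); last lia.
by rewrite (_ : (N.-2 - n.-2 == n)%N) ?scale1r //; apply/eqP; lia.
Qed.

Lemma wpow_e0_hi m : (m <= n.-1)%N -> wpow (n + m) *m evec 0 = - evec (N.-1 - m).
Proof.
elim: m => [|m IH] mn.
  rewrite (_ : (n + 0 = (n.-1).+1)%N); last lia.
  rewrite wpowS -mulmxA wpow_e0 // hat_w_evec; last lia.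
  by rewrite /wsign /wperm eqxx ltnn subn0 scaleN1r.
rewrite addnS wpowS -mulmxA IH; last lia.
rewrite mulmxN hat_w_evec; last lia.
rewrite /wsign /wperm (_ : (N.-1 - m == n.-1)%N = false); last by apply/negbTE/eqP; lia.
rewrite (_ : (N.-1 - m < n.-1)%N = false); last lia.
rewrite (_ : (N.-1 - m == n)%N = false); last by apply/negbTE/eqP; lia.
by rewrite scale1r; congr (- evec _); lia.
Qed.

Hypotheses (two_neq0 : (2 : F) != 0) (xi_neq1 : xi != 1)
  (xi_gen : forall c : F, c != 0 -> exists k, c = xi ^+ k).

Definition gens (Y : 'M[F]_N) : Prop := Y = h \/ Y = hat_x12_1 F n *m W.
Local Notation gen := (gen_by gens).
Local Notation xw := (hat_x12_1 F n *m W).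

Lemma gen_inSp X : gen X -> inSp X.
Proof.
elim=> {X} [X [->|->]| |X Y _ spX _ spY|X _ spX].
- exact: inSp_hat_h1.
- apply: inSpM inSp_hat_w.
  by rewrite hat_x12_1E; apply: inSp_siegel; exact: x12_isotropic.
- exact: inSp1.
- exact: inSpM.
- exact: inSpV.
Qed.

Lemma spg_gen : sp_subgroup gen.
Proof. by split=> [X Y|X|X]; [exact: gen_mul|exact: gen_inv|exact: gen_inSp]. Qed.

Lemma gen_h : gen h. Proof. by apply: gen_base; left. Qed.
Lemma gen_xw : gen xw. Proof. by apply: gen_base; right. Qed.

Lemma xw_h1w : xw *m (h1w *m x12w (1 - xi^-1)) = h *m xw.
Proof.
set u := 1 - xi^-1.
have E : W *m (h1w *m x12w u) = h *m (x12 u *m W).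
  by rewrite mulmxA hat_w_h1w -mulmxA hat_w_x12w.
rewrite hat_x12_1E -(mulmxA (x12 1)) E (mulmxA h (x12 u) W) hat_h1_x12.
rewrite [RHS](mulmxA h (x12 1) W) hat_h1_x12.
rewrite -(mulmxA (x12 (xi * u)) h W) (mulmxA (x12 1)) x12D -(mulmxA (x12 (xi * 1)) h W).
by rewrite /u mulr1 mulrDr mulr1 mulrN mulfV // addrC subrK.
Qed.

(* Conjugating [h] by [xw^-1] gives [h1w * x12w u]; conjugating that by [h]
   rescales [u] by [xi^-1], and the quotient of the two is a pure root element. *)
Lemma gen_x12w_base : gen (x12w (xi^-1 * (1 - xi^-1) - (1 - xi^-1))).
Proof.
set u := 1 - xi^-1.
have c1E : invmx xw *m h *m xw = h1w *m x12w u.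
  rewrite -(mulmxA (invmx xw) h xw) -xw_h1w (mulmxA (invmx xw) xw) mulVmx ?mul1mx //.
  exact: (spg_unit spg_gen gen_xw).
have gc1 : gen (h1w *m x12w u).
  by rewrite -c1E; have := spg_conj spg_gen (gen_inv gen_xw) gen_h; rewrite invmxK.
have c2E : h *m (h1w *m x12w u) *m invmx h = h1w *m x12w (xi^-1 * u).
  rewrite (mulmxA h h1w (x12w u)) -h1w_hat_h1 -(mulmxA h1w h (x12w u)) hat_h1_x12w.
  rewrite (mulmxA h1w _ h) -(mulmxA (h1w *m _) h) mulmxV ?mulmx1 //.
  exact: (spg_unit spg_gen gen_h).
have gc2 : gen (h1w *m x12w (xi^-1 * u)) by rewrite -c2E; exact: (spg_conj spg_gen gen_h gc1).
have E : (h1w *m x12w u) *m x12w (xi^-1 * u - u) = h1w *m x12w (xi^-1 * u).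
  by rewrite -mulmxA x12wD addrC subrK.
have : gen (invmx (h1w *m x12w u) *m (h1w *m x12w (xi^-1 * u))).
  by apply: gen_mul => //; exact: gen_inv.
by rewrite -E mulmxA mulVmx ?mul1mx //; exact: (spg_unit spg_gen gc1).
Qed.

Lemma gen_x12w_mulxi t : gen (x12w t) -> gen (x12w (xi * t)).
Proof.
move=> gt; have E : h *m x12w (xi * t) = x12w t *m h.
  by rewrite hat_h1_x12w mulrA mulVf // mul1r.
have := spg_conj spg_gen (gen_inv gen_h) gt.
rewrite invmxK -(mulmxA (invmx h)) -E mulmxA mulVmx ?mul1mx //.
exact: (spg_unit spg_gen gen_h).
Qed.

Lemma gen_x12w t : gen (x12w t).
Proof.
set r := xi^-1 * (1 - xi^-1) - (1 - xi^-1).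
have r0 : r != 0.
  rewrite /r -[X in _ - X]mul1r -mulrBl mulf_eq0 negb_or !subr_eq0.
  by rewrite [1 == xi^-1]eq_sym invr_eq1 xi_neq1.
have [->|t0] := eqVneq t 0; first by rewrite /x12w siegel0; exact: gen_one.
have [k ->] : exists k, t = xi ^+ k * r.
  have [k Ek] := xi_gen (mulf_neq0 t0 (invr_neq0 r0)).
  by exists k; rewrite -Ek mulfVK.
elim: k => [|k IH]; first by rewrite mul1r; exact: gen_x12w_base.
by rewrite exprS -mulrA; exact: gen_x12w_mulxi.
Qed.

Lemma gen_x12 t : gen (x12 t).
Proof.
have E : xw *m x12w t = x12 t *m xw.
  by rewrite hat_x12_1E -mulmxA hat_w_x12w !mulmxA !x12D addrC.
rewrite (conj_intertwine (spg_unit spg_gen gen_xw) E).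
exact: (spg_conj spg_gen gen_xw (gen_x12w t)).
Qed.

Lemma gen_hat_w : gen W.
Proof.
have -> : W = x12 (-1) *m xw by rewrite hat_x12_1E mulmxA x12D addNr /x12 siegel0 mul1mx.
exact: (gen_mul (gen_x12 _) gen_xw).
Qed.

Lemma gen_wpow k : gen (wpow k).
Proof.
elim: k => [|k IH]; first exact: gen_one.
by rewrite wpowS; exact: (gen_mul gen_hat_w IH).
Qed.

Lemma gen_siegel_adj j t : (j <= n.-2)%N -> gen (siegel (evec j) (- evec (N.-2 - j)) t).
Proof.
move=> jn; have := spg_siegel_conj spg_gen (gen_wpow j) (gen_x12 t).
by rewrite mulmxN wpow_e0 ?wpow_eN2 //; lia.
Qed.

Lemma gen_siegel_e0_pred t : gen (siegel (evec 0) (evec n.-1) t).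
Proof.
have := spg_siegel_conj spg_gen (gen_wpow n.-1) (gen_x12 (- t)).
by rewrite mulmxN wpow_e0 // wpow_eN2_last siegelN opprK siegelC.
Qed.

Lemma gen_siegel_e0 j t : (1 <= j < n)%N -> gen (siegel (evec 0) (evec (N.-1 - j)) t).
Proof.
elim: j t => [|j IH] t jn; first lia.
have [j0|j_gt0] := posnP j.
  rewrite j0 (_ : N.-1 - 1 = N.-2)%N; last lia.
  by have := gen_x12 (- t); rewrite /x12 siegelN opprK.
pose g := siegel (evec j) (- evec (N.-2 - j)) 1.
have g_e0 : g *m evec 0 = evec 0.
  by apply: siegel_fix; rewrite ?sformNl sform_evec_eq0 ?oppr0 //; lia.
have g_ej' : g *m evec (N.-1 - j) = evec (N.-1 - j) + - evec (N.-2 - j).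
  rewrite /g siegelE sformNl !sform_evec; try lia.
  apply/matrixP => a b; rewrite !mxE.
  by move: (nat_of_ord a) => aa; case_ifs; ring.
have := spg_siegel_conj spg_gen (gen_siegel_adj 1 (ltac:(lia) : (j <= n.-2)%N))
  (IH (- t) (ltac:(lia))).
rewrite -/g g_e0 g_ej' siegelDr; first last.
- by rewrite sformNr sform_evec_eq0 ?oppr0 //; lia.
- by rewrite sformNr sform_evec_eq0 ?oppr0 //; lia.
- by rewrite sform_evec_eq0 //; lia.
have gen_Q := IH (- t) (ltac:(lia)); move/(gen_mul (gen_inv gen_Q)).
rewrite mulmxA mulVmx ?mul1mx; last exact: (spg_unit spg_gen gen_Q).
by rewrite siegelN opprK (_ : (N.-1 - j.+1 = N.-2 - j)%N) //; lia.
Qed.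

Lemma gen_transv_e0 c : gen (transv (evec 0) c).
Proof.
have e0n : sform (evec 0) (evec n) = 0 by rewrite sform_evec_eq0 //; lia.
have e0n1 : sform (evec 0) (evec n.-1) = 0 by rewrite sform_evec_eq0 //; lia.
have nn1 : sform (evec n) (evec n.-1) = -1.
  rewrite sform_evec; try lia.
  by rewrite (_ : (n + n.-1 == N.-1)%N = true) ?ltnn //; apply/eqP; lia.
have -> : c = 2 * 1 * - (c / 2) * sform (evec n) (evec n.-1) by rewrite nn1; field.
rewrite siegel_commutator //.
have gen_n s : gen (siegel (evec 0) (evec n) s).
  have := gen_siegel_e0 s (ltac:(lia) : (1 <= n.-1 < n)%N).
  by rewrite (_ : N.-1 - n.-1 = n)%N //; lia.
by repeat apply: gen_mul => //; exact: gen_siegel_e0_pred.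
Qed.

Lemma gen_transv_evec k c : (k < N)%N -> gen (transv (evec k) c).
Proof.
move=> kN; case: (leqP k n.-1) => kn.
  by have := spg_transv_conj spg_gen (gen_wpow k) (gen_transv_e0 c); rewrite wpow_e0.
have := spg_transv_conj spg_gen (gen_wpow (n + (N.-1 - k))) (gen_transv_e0 c).
rewrite wpow_e0_hi; last lia.
by rewrite transvN (_ : (N.-1 - (N.-1 - k) = k)%N) //; lia.
Qed.

Lemma inSp_gen X : inSp X <-> gen X.
Proof.
split; last exact: gen_inSp.
apply: (inSp_spg spg_gen); apply: (spg_transv_all spg_gen).
- exact: gen_transv_evec.
- exact: gen_siegel_e0.
Qed.

End Generators.
End SymplecticGroup.

Lemma two_neq0_odd_card (F : finFieldType) : odd #|F| -> (2 : F) != 0.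
Proof.
move=> oddF; apply/negP => /eqP two0.
have char2 : 2%N \in [pchar F] by rewrite inE /= two0 eqxx.
have := finNzRing_gt1 F; move: oddF; rewrite (card_pprimeChar char2).
by case: (logn _ _) => [|k] //; rewrite expnS oddM.
Qed.

Lemma primitive_root_unit_group (F : finFieldType) (xi : F) :
  odd #|F| -> (#|F|.-1).-primitive_root xi ->
  [/\ xi != 0, xi != 1 & forall c : F, c != 0 -> exists k, c = xi ^+ k].
Proof.
move=> oddF xi_prim; have q_gt1 : (1 < #|F|)%N := finNzRing_gt1 F.
have q_gt2 : (2 < #|F|)%N.
  by case: (ltngtP #|F| 2) oddF => // [|->] //; lia.
split.
- apply/negP => /eqP xi0; move: (prim_expr_order xi_prim); rewrite xi0 expr0n.
  case: (#|F|.-1) (prim_order_gt0 xi_prim) => // m _ /eqP.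
  by rewrite eq_sym oner_eq0.
- apply/negP => /eqP xi1; have := prim_order_dvd xi_prim 1%N.
  by rewrite xi1 expr1 eqxx dvdn1 => /eqP; lia.
- move=> c c0; have : c ^+ #|F|.-1 = 1.
    by apply: (mulfI c0); rewrite -exprS prednK ?expf_card ?mulr1 //; lia.
  by case/(prim_rootP xi_prim) => i ->; exists i.
Qed.

Unset Implicit Arguments.

Theorem mainTheorem4 (F : finFieldType) (n : nat) (xi : F) :
  (1 < n)%N -> odd #|F| -> (#|F|.-1).-primitive_root xi ->
  forall X : 'M[F]_(n.*2),
    inSp X <->
    gen_by (fun Y => Y = hat_h1 n xi \/ Y = hat_x12_1 F n *m hat_w F n) X.
Proof.
move=> n_gt1 oddF xi_prim X.
have [xi_neq0 xi_neq1 xi_gen] := primitive_root_unit_group oddF xi_prim.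
have n_gt0 := ltnW n_gt1; have two_neq0 := two_neq0_odd_card oddF.
exact: inSp_gen.
Qed.
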